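(* Let $\gamma$ be a Hamel basis of $\mathbb{R}$ over $\mathbb{Q}$ with $1\in\gamma$, let $A_\gamma:\mathbb{R}\to\mathbb{R}$ be the unique $\mathbb{Q}$-linear map with $A_\gamma(1)=1$ and $A_\gamma(b)=0$ for all $b\in\gamma\setminus\{1\}$, and let $n\ge1$ be an integer. Then $f_n(x)=A_\gamma(x)^n$ is a discontinuous $n$-monomial function whose graph $\{(x,f_n(x)):x\in\mathbb{R}\}$ is totally disconnected.
   Context: For $h\in\mathbb{R}$, $\Delta_h f(x)=f(x+h)-f(x)$ and $\Delta_h^{n}=\Delta_h\circ\Delta_h^{n-1}$. A function $f:\mathbb{R}\to\mathbb{R}$ is an $n$-monomial function if $\frac{1}{n!}\Delta_h^n f(x)=f(h)$ for all $x,h\in\mathbb{R}$. A subset of $\mathbb{R}^2$ is totally disconnected if all its connected components are singletons. *)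

From Stdlib Require Import Reals Lra QArith Qreals List Arith.
Open Scope R_scope.

Definition qcomb (l : list (Q * R)) : R :=
  fold_right (fun p acc => Q2R (fst p) * snd p + acc) 0 l.

Definition Q_lin_indep (gamma : R -> Prop) : Prop :=
  forall l : list (Q * R),
    NoDup (map snd l) -> Forall (fun p => gamma (snd p)) l ->
    qcomb l = 0 -> Forall (fun p => (fst p == 0)%Q) l.

Definition Q_spans (gamma : R -> Prop) : Prop :=
  forall x : R, exists l : list (Q * R),
    Forall (fun p => gamma (snd p)) l /\ qcomb l = x.

Definition hamel_basis (gamma : R -> Prop) : Prop :=
  Q_lin_indep gamma /\ Q_spans gamma.

Definition Q_linear (A : R -> R) : Prop :=
  (forall x y, A (x + y) = A x + A y) /\
  (forall (q : Q) x, A (Q2R q * x) = Q2R q * A x).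

Fixpoint deltan (n : nat) (h : R) (f : R -> R) (x : R) : R :=
  match n with
  | O => f x
  | S k => deltan k h f (x + h) - deltan k h f x
  end.

Definition monomial_fun (n : nat) (f : R -> R) : Prop :=
  forall x h, / INR (Factorial.fact n) * deltan n h f x = f h.

Definition dist2 (p q : R * R) : R :=
  sqrt ((fst p - fst q) ^ 2 + (snd p - snd q) ^ 2).

Definition open2 (U : R * R -> Prop) : Prop :=
  forall p, U p -> exists eps, eps > 0 /\ forall q, dist2 p q < eps -> U q.

Definition connected2 (S : R * R -> Prop) : Prop :=
  ~ exists U V : R * R -> Prop,
      open2 U /\ open2 V /\
      (forall p, S p -> U p \/ V p) /\
      (exists p, S p /\ U p) /\ (exists p, S p /\ V p) /\
      (forall p, S p -> U p -> V p -> False).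

Definition component2 (S : R * R -> Prop) (x : R * R) : R * R -> Prop :=
  fun y => exists C : R * R -> Prop,
    (forall p, C p -> S p) /\ connected2 C /\ C x /\ C y.

Definition totally_disconnected2 (S : R * R -> Prop) : Prop :=
  forall x, S x -> forall y, component2 S x y <-> y = x.

Definition graph (f : R -> R) : R * R -> Prop := fun p => snd p = f (fst p).

From Stdlib Require Import Reals QArith Qreals Lra Lia Znumtheory Wf_Z.
Open Scope R_scope.

(* [A] takes rational values, so [x - A x] lies in its kernel; taking
   [x = sqrt 2] gives a nonzero kernel element [k].  Hence [A] equals the
   rational [q] on the dense set [q + Q k].  In particular [f_n = A^n]
   vanishes on a dense set while [f_n 1 = 1], so [f_n] is discontinuous.
   Being a power of an additive map, [f_n] is [n]-monomial because
   [Delta_h^n y^n = n! h^n].  Finally the graph lies in [R x Q]: two of its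
   points at different heights are separated by a horizontal line at an
   irrational height, and two points at the same height [v] by the vertical
   line through an abscissa [s] between them where [f_n s > v], glued to a
   horizontal line at an irrational height between [v] and [f_n s]. *)

Definition is_rational (x : R) : Prop := exists q : Q, x = Q2R q.

Lemma is_rational_0 : is_rational 0.
Proof. exists 0%Q. unfold Q2R; simpl; field. Qed.

Lemma is_rational_1 : is_rational 1.
Proof. exists 1%Q. unfold Q2R; simpl; field. Qed.

Lemma is_rational_plus x y : is_rational x -> is_rational y -> is_rational (x + y).
Proof. intros [a ->] [b ->]. exists (a + b)%Q. now rewrite Q2R_plus. Qed.

Lemma is_rational_mult x y : is_rational x -> is_rational y -> is_rational (x * y).
Proof. intros [a ->] [b ->]. exists (a * b)%Q. now rewrite Q2R_mult. Qed.

Lemma is_rational_pow x n : is_rational x -> is_rational (x ^ n).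
Proof.
  intros Hx. induction n as [|n IH]; simpl.
  - exact is_rational_1.
  - now apply is_rational_mult.
Qed.

Lemma Q2R_dense a b : a < b -> exists q, a < Q2R q < b.
Proof.
  intros Hab.
  destruct (archimed (/ (b - a))) as [HN _].
  set (N := up (/ (b - a))) in *.
  assert (Hinv : / (b - a) > 0) by (apply Rinv_0_lt_compat; lra).
  assert (HN0 : (0 < N)%Z) by (apply lt_0_IZR; lra).
  assert (Hgap : (b - a) * IZR N > 1).
  { replace 1 with ((b - a) * / (b - a)) by (field; lra).
    apply Rmult_lt_compat_l; lra. }
  destruct (archimed (a * IZR N)) as [Hm1 Hm2].
  (* [N > 1 / (b - a)], so [up (a N) / N] overshoots [a] by at most [1 / N]. *)
  exists (Qmake (up (a * IZR N)) (Z.to_pos N)). unfold Q2R; simpl.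
  rewrite Z2Pos.id by lia.
  split; apply (Rmult_lt_reg_r (IZR N)); try lra;
    rewrite Rmult_assoc, Rinv_l, Rmult_1_r by lra; lra.
Qed.

Lemma Z_sqr_neq_twice_sqr (p q : Z) : (0 < q)%Z -> (p * p <> 2 * (q * q))%Z.
Proof.
  intros Hq. assert (Hq0 : (0 <= q)%Z) by lia.
  revert p Hq. pattern q. apply Z_lt_induction; [clear q Hq0 | exact Hq0].
  intros q IH p Hq Hpq.
  assert (Hp : (2 | p)%Z).
  { destruct (prime_mult 2 prime_2 p p); [exists (q * q)%Z; lia | auto | auto]. }
  destruct Hp as [p' ->].
  assert (Hq' : (2 | q)%Z).
  { destruct (prime_mult 2 prime_2 q q); [exists (p' * p')%Z; nia | auto | auto]. }
  destruct Hq' as [q' ->].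
  apply (IH q' ltac:(lia) p' ltac:(lia)). nia.
Qed.

Lemma sqrt2_irrational : ~ is_rational (sqrt 2).
Proof.
  intros [q Hq].
  assert (Hsq : Q2R (q * q) = Q2R 2).
  { rewrite Q2R_mult, <- Hq, sqrt_sqrt by lra. unfold Q2R; simpl; field. }
  apply eqR_Qeq in Hsq. destruct q as [p d]. unfold Qeq, Qmult in Hsq; simpl in Hsq.
  rewrite Pos2Z.inj_xO, Pos2Z.inj_mul in Hsq.
  apply (Z_sqr_neq_twice_sqr p (Zpos d)); lia.
Qed.

Lemma irrational_dense a b : a < b -> exists r, a < r < b /\ ~ is_rational r.
Proof.
  intros Hab. destruct (Q2R_dense (a - sqrt 2) (b - sqrt 2)) as [q Hq]; [lra|].
  exists (Q2R q + sqrt 2). split; [lra|].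
  intros [t Ht]. apply sqrt2_irrational. exists (t - q)%Q.
  rewrite Q2R_minus. lra.
Qed.

Section QLinearMap.

Variable A : R -> R.
Hypothesis A_Q_linear : Q_linear A.

Lemma Q_linear_scale_kernel k q : A k = 0 -> A (Q2R q * k) = 0.
Proof. intros Hk. rewrite (proj2 A_Q_linear), Hk. ring. Qed.

Lemma Q_linear_0 : A 0 = 0.
Proof. pose proof (proj1 A_Q_linear 0 0) as H0. rewrite Rplus_0_l in H0. lra. Qed.

Lemma Q_linear_rational_valued (gamma : R -> Prop) :
  Q_spans gamma -> (forall b, gamma b -> is_rational (A b)) ->
  forall x, is_rational (A x).
Proof.
  intros Hspan Hgamma x. destruct (Hspan x) as [l [Hl <-]].
  induction l as [|[q b] l IH]; simpl.
  - rewrite Q_linear_0. exact is_rational_0.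
  - inversion Hl as [|? ? Hb Hl']; subst.
    rewrite (proj1 A_Q_linear), (proj2 A_Q_linear).
    apply is_rational_plus; [apply is_rational_mult; [now exists q | now apply Hgamma] |].
    now apply IH.
Qed.

Hypothesis A_1 : A 1 = 1.
Hypothesis A_rational : forall x, is_rational (A x).

Lemma Q_linear_Q2R q : A (Q2R q) = Q2R q.
Proof. rewrite <- (Rmult_1_r (Q2R q)), (proj2 A_Q_linear), A_1. ring. Qed.

Lemma Q_linear_pos_kernel : exists k, 0 < k /\ A k = 0.
Proof.
  destruct (A_rational (sqrt 2)) as [q Hq].
  assert (Hk : A (sqrt 2 + Q2R (- q)) = 0).
  { rewrite (proj1 A_Q_linear), Q_linear_Q2R, Q2R_opp. lra. }
  assert (Hk0 : sqrt 2 + Q2R (- q) <> 0).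
  { rewrite Q2R_opp. intros E. apply sqrt2_irrational. exists q. lra. }
  set (k0 := sqrt 2 + Q2R (- q)) in *.
  destruct (Rtotal_order 0 k0) as [Hpos|[E|Hneg]].
  - eauto.
  - now destruct Hk0.
  - exists (Q2R (- 1) * k0). split.
    + replace (Q2R (- 1)) with (- 1) by (unfold Q2R; simpl; field). lra.
    + now apply Q_linear_scale_kernel.
Qed.

Lemma Q_linear_level_dense q a b : a < b -> exists s, a < s < b /\ A s = Q2R q.
Proof.
  intros Hab. destruct Q_linear_pos_kernel as [k [Hk HAk]].
  destruct (Q2R_dense ((a - Q2R q) / k) ((b - Q2R q) / k)) as [t [Ht1 Ht2]].
  { apply Rmult_lt_compat_r; [apply Rinv_0_lt_compat|]; lra. }
  exists (Q2R q + Q2R t * k). split.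
  - apply Rmult_lt_compat_r with (r := k) in Ht1, Ht2; try exact Hk.
    unfold Rdiv in Ht1, Ht2. rewrite Rmult_assoc, Rinv_l, Rmult_1_r in Ht1, Ht2 by lra.
    lra.
  - rewrite (proj1 A_Q_linear), Q_linear_scale_kernel, Q_linear_Q2R by exact HAk.
    ring.
Qed.

Variable n : nat.

Lemma Q_linear_pow_range_gaps a b :
  a < b -> exists r, a < r < b /\ forall x, A x ^ n <> r.
Proof.
  intros Hab. destruct (irrational_dense a b Hab) as [r [Hr Hirr]].
  exists r. split; [exact Hr|]. intros x E. apply Hirr.
  rewrite <- E. apply is_rational_pow, A_rational.
Qed.

Hypothesis n_pos : (1 <= n)%nat.

Lemma Q_linear_pow_dense_zeros a b :
  a < b -> exists s, a < s < b /\ A s ^ n = 0.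
Proof.
  intros Hab. destruct (Q_linear_level_dense 0%Q a b Hab) as [s [Hs HAs]].
  exists s. split; [exact Hs|]. rewrite HAs.
  replace (Q2R 0) with 0 by (unfold Q2R; simpl; field). apply pow_i; lia.
Qed.

Lemma Q_linear_pow_large_values a b v :
  a < b -> exists s, a < s < b /\ v < A s ^ n.
Proof.
  intros Hab. destruct (Q2R_dense (Rmax 1 v) (Rmax 1 v + 1)) as [q Hq]; [lra|].
  destruct (Q_linear_level_dense q a b Hab) as [s [Hs HAs]].
  exists s. split; [exact Hs|]. rewrite HAs.
  pose proof (Rmax_l 1 v). pose proof (Rmax_r 1 v).
  assert (Q2R q ^ 1 <= Q2R q ^ n) by (apply Rle_pow; lra || lia).
  simpl in *. lra.
Qed.

End QLinearMap.

Lemma not_continuity_of_dense_zeros (f : R -> R) x0 :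
  f x0 <> 0 -> (forall a b, a < b -> exists s, a < s < b /\ f s = 0) ->
  ~ continuity f.
Proof.
  intros Hx0 Hzeros Hc.
  destruct (Hc x0 (Rabs (f x0))) as [alp [Halp Hnear]]; [now apply Rabs_pos_lt|].
  destruct (Hzeros (x0 - alp) x0) as [s [Hs Hfs]]; [lra|].
  assert (Hd : R_dist (f s) (f x0) < Rabs (f x0)).
  { apply Hnear. split; [split; [exact I | lra]|].
    simpl. unfold R_dist. rewrite Rabs_left by lra. lra. }
  unfold R_dist in Hd. rewrite Hfs, Rminus_0_l, Rabs_Ropp in Hd. lra.
Qed.

Lemma deltan_shift k h (f : R -> R) a x :
  deltan k h (fun y => f (y + a)) x = deltan k h f (x + a).
Proof.
  revert f x. induction k as [|k IH]; intros f x; simpl; auto.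
  rewrite !IH. now replace (x + h + a) with (x + a + h) by ring.
Qed.

Lemma deltan_minus k h (f g : R -> R) x :
  deltan k h (fun y => f y - g y) x = deltan k h f x - deltan k h g x.
Proof. revert x. induction k as [|k IH]; intros x; simpl; auto. rewrite !IH. ring. Qed.

Lemma deltan_succ_inner k h (f : R -> R) x :
  deltan (S k) h f x = deltan k h (fun y => f (y + h) - f y) x.
Proof. now rewrite deltan_minus, deltan_shift. Qed.

Lemma deltan_additive_comp (A : R -> R) :
  (forall x y, A (x + y) = A x + A y) ->
  forall k h g x, deltan k h (fun y => g (A y)) x = deltan k (A h) g (A x).
Proof.
  intros Hadd k. induction k as [|k IH]; intros h g x; simpl; auto.
  now rewrite !IH, Hadd.
Qed.

(* [lead_diff m c f]: for all steps [h_1, ..., h_m] the iterated difference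
   [Delta_(h_1) ... Delta_(h_m) f] is the constant [m! c h_1 ... h_m], as for
   [f y = c y^m].  Letting the steps differ is what makes [lead_diff] stable
   under [f |-> y f y]. *)
Fixpoint lead_diff (m : nat) (c : R) (f : R -> R) : Prop :=
  match m with
  | O => forall y, f y = c
  | S m' => forall h, lead_diff m' (INR m * c * h) (fun y => f (y + h) - f y)
  end.

Lemma lead_diff_deltan m c f h x :
  lead_diff m c f -> deltan m h f x = INR (Factorial.fact m) * c * h ^ m.
Proof.
  revert c f. induction m as [|m IH]; intros c f Hf.
  - simpl in *. rewrite Hf. ring.
  - rewrite deltan_succ_inner, (IH _ _ (Hf h)).
    change (Factorial.fact (S m)) with (S m * Factorial.fact m)%nat.
    rewrite mult_INR. simpl pow. ring.
Qed.

Lemma lead_diff_ext m c (f g : R -> R) :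
  lead_diff m c f -> (forall y, f y = g y) -> lead_diff m c g.
Proof.
  revert c f g. induction m as [|m IH]; intros c f g Hf E.
  - simpl in *. intros y. now rewrite <- E.
  - intros h. apply (IH _ _ _ (Hf h)). intros y. now rewrite !E.
Qed.

Lemma lead_diff_plus m a b f g :
  lead_diff m a f -> lead_diff m b g -> lead_diff m (a + b) (fun y => f y + g y).
Proof.
  revert a b f g. induction m as [|m IH]; intros a b f g Hf Hg.
  - simpl in *. intros y. now rewrite Hf, Hg.
  - intros h. replace (INR (S m) * (a + b) * h)
      with (INR (S m) * a * h + INR (S m) * b * h) by ring.
    eapply lead_diff_ext; [apply (IH _ _ _ _ (Hf h) (Hg h))|].
    intros y. simpl. ring.
Qed.

Lemma lead_diff_scale m a k f :
  lead_diff m a f -> lead_diff m (k * a) (fun y => k * f y).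
Proof.
  revert a f. induction m as [|m IH]; intros a f Hf.
  - simpl in *. intros y. now rewrite Hf.
  - intros h. replace (INR (S m) * (k * a) * h) with (k * (INR (S m) * a * h)) by ring.
    eapply lead_diff_ext; [apply (IH _ _ (Hf h))|]. intros y. simpl. ring.
Qed.

Lemma lead_diff_shift m a t f :
  lead_diff m a f -> lead_diff m a (fun y => f (y + t)).
Proof.
  revert a f. induction m as [|m IH]; intros a f Hf.
  - simpl in *. intros y. apply Hf.
  - intros h. eapply lead_diff_ext; [apply (IH _ _ (Hf h))|].
    intros y. simpl. now replace (y + h + t) with (y + t + h) by ring.
Qed.

(* [(y + h) f (y + h) - y f y = y Delta_h f y + h f (y + h)]: the first term
   raises the degree, the second contributes the missing [h c]. *)
Lemma lead_diff_mul_id m c f :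
  lead_diff m c f -> lead_diff (S m) c (fun y => y * f y).
Proof.
  revert c f. induction m as [|m IH]; intros c f Hf.
  - simpl in *. intros h y. rewrite !Hf. ring.
  - intros h.
    pose proof (lead_diff_plus _ _ _ _ _ (IH _ _ (Hf h))
                  (lead_diff_scale _ _ h _ (lead_diff_shift _ _ h _ Hf))) as Hsum.
    replace (INR (S (S m)) * c * h) with (INR (S m) * c * h + h * c)
      by (rewrite (S_INR (S m)); ring).
    eapply lead_diff_ext; [exact Hsum|]. intros y. simpl. ring.
Qed.

Lemma lead_diff_pow n : lead_diff n 1 (fun y => y ^ n).
Proof.
  induction n as [|n IH].
  - simpl. auto.
  - eapply lead_diff_ext; [apply lead_diff_mul_id, IH|]. intros y. reflexivity.
Qed.

Lemma monomial_fun_additive_pow (A : R -> R) n :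
  (forall x y, A (x + y) = A x + A y) -> monomial_fun n (fun x => A x ^ n).
Proof.
  intros Hadd x h.
  rewrite (deltan_additive_comp A Hadd n h (fun y => y ^ n) x).
  rewrite (lead_diff_deltan n 1 _ (A h) (A x) (lead_diff_pow n)).
  field. apply INR_fact_neq_0.
Qed.

Lemma dist2_fst p q : Rabs (fst p - fst q) <= dist2 p q.
Proof.
  unfold dist2. rewrite <- sqrt_Rsqr_abs. apply sqrt_le_1_alt. unfold Rsqr.
  pose proof (pow2_ge_0 (snd p - snd q)). nra.
Qed.

Lemma dist2_snd p q : Rabs (snd p - snd q) <= dist2 p q.
Proof.
  unfold dist2. rewrite <- sqrt_Rsqr_abs. apply sqrt_le_1_alt. unfold Rsqr.
  pose proof (pow2_ge_0 (fst p - fst q)). nra.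
Qed.

Section LipschitzLevelSets.

Variable g : R * R -> R.
Hypothesis g_Lipschitz : forall p q, Rabs (g p - g q) <= dist2 p q.

Lemma open2_lt s : open2 (fun p => g p < s).
Proof.
  intros p Hp. exists (s - g p). split; [lra|]. intros q Hq.
  pose proof (g_Lipschitz p q) as Hpq. rewrite Rabs_minus_sym in Hpq.
  pose proof (Rle_abs (g q - g p)). lra.
Qed.

Lemma open2_gt s : open2 (fun p => g p > s).
Proof.
  intros p Hp. exists (g p - s). split; [lra|]. intros q Hq.
  pose proof (g_Lipschitz p q). pose proof (Rle_abs (g p - g q)). lra.
Qed.

End LipschitzLevelSets.

Lemma open2_or U V : open2 U -> open2 V -> open2 (fun p => U p \/ V p).
Proof.
  intros HU HV p [Hp|Hp].
  - destruct (HU p Hp) as [e [He Hq]]. exists e. split; auto.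
  - destruct (HV p Hp) as [e [He Hq]]. exists e. split; auto.
Qed.

Lemma open2_and U V : open2 U -> open2 V -> open2 (fun p => U p /\ V p).
Proof.
  intros HU HV p [HpU HpV].
  destruct (HU p HpU) as [e1 [He1 Hq1]]. destruct (HV p HpV) as [e2 [He2 Hq2]].
  exists (Rmin e1 e2). split; [now apply Rmin_pos|].
  intros q Hq. pose proof (Rmin_l e1 e2). pose proof (Rmin_r e1 e2).
  split; [apply Hq1 | apply Hq2]; lra.
Qed.

Lemma not_connected2_of_separation (C U V : R * R -> Prop) p q :
  open2 U -> open2 V -> (forall u, C u -> U u \/ V u) ->
  (forall u, C u -> U u -> V u -> False) ->
  C p -> U p -> C q -> V q -> ~ connected2 C.
Proof.
  intros HU HV Hcov Hdisj Cp Up Cq Vq Hc.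
  apply Hc. exists U, V. repeat split; eauto.
Qed.

Lemma connected2_singleton x : connected2 (fun p => p = x).
Proof.
  intros [U [V [_ [_ [_ [[p [-> Up]] [[q [-> Vq]] Hdisj]]]]]]].
  exact (Hdisj x eq_refl Up Vq).
Qed.

Section GraphComponents.

Variable f : R -> R.
Hypothesis f_range_gaps :
  forall a b, a < b -> exists r, a < r < b /\ forall x, f x <> r.
Hypothesis f_large_values :
  forall a b v, a < b -> exists s, a < s < b /\ v < f s.

Variable C : R * R -> Prop.
Hypothesis C_in_graph : forall p, C p -> graph f p.
Hypothesis C_connected : connected2 C.

Lemma graph_connected_snd_eq p q : C p -> C q -> snd p = snd q.
Proof.
  assert (Hlt : forall p q, C p -> C q -> ~ snd p < snd q).
  { intros p' q' Cp Cq Hpq. destruct (f_range_gaps _ _ Hpq) as [r [Hr Hgap]].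
    apply (not_connected2_of_separation C
             (fun u => snd u < r) (fun u => snd u > r) p' q');
      auto using open2_lt, open2_gt, dist2_snd; try lra.
    - intros u Cu. destruct (Rtotal_order (snd u) r) as [|[E|]]; auto.
      exfalso. apply (Hgap (fst u)). rewrite <- E. symmetry. exact (C_in_graph u Cu).
    - intros u _ Hl Hg. lra. }
  intros Cp Cq. destruct (Rtotal_order (snd p) (snd q)) as [H|[H|H]]; auto.
  - now destruct (Hlt p q).
  - now destruct (Hlt q p).
Qed.

Lemma graph_connected_fst_eq a b v : C (a, v) -> C (b, v) -> a = b.
Proof.
  assert (Hlt : forall a b, C (a, v) -> C (b, v) -> ~ a < b).
  { intros a' b' Ca Cb Hab.
    destruct (f_large_values a' b' v Hab) as [s [Hs Hfs]].
    destruct (f_range_gaps _ _ Hfs) as [r [Hr Hgap]].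
    apply (not_connected2_of_separation C
             (fun u => fst u < s \/ snd u > r) (fun u => fst u > s /\ snd u < r)
             (a', v) (b', v)); simpl; try lra; auto.
    - apply open2_or; [apply open2_lt | apply open2_gt]; auto using dist2_fst, dist2_snd.
    - apply open2_and; [apply open2_gt | apply open2_lt]; auto using dist2_fst, dist2_snd.
    - intros u Cu. pose proof (C_in_graph u Cu) as Hu. unfold graph in Hu.
      destruct (Rtotal_order (fst u) s) as [Hl|[E|Hg]]; [left; left; exact Hl | |].
      + left; right. rewrite Hu, E. lra.
      + destruct (Rtotal_order (snd u) r) as [|[E|]];
          [right; split; auto | | left; right; lra].
        exfalso. apply (Hgap (fst u)). now rewrite <- Hu.
    - intros u _ [H|H] [H' H'']; lra. }
  intros Ca Cb. destruct (Rtotal_order a b) as [H|[H|H]]; auto.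
  - now destruct (Hlt a b).
  - now destruct (Hlt b a).
Qed.

End GraphComponents.

Lemma totally_disconnected2_graph (f : R -> R) :
  (forall a b, a < b -> exists r, a < r < b /\ forall x, f x <> r) ->
  (forall a b v, a < b -> exists s, a < s < b /\ v < f s) ->
  totally_disconnected2 (graph f).
Proof.
  intros Hgaps Hlarge x Sx y. split.
  - intros [C [HC [Hconn [Cx Cy]]]].
    pose proof (graph_connected_snd_eq f Hgaps C HC Hconn x y Cx Cy) as E2.
    destruct x as [x1 x2], y as [y1 y2]. simpl in E2. subst y2.
    now rewrite (graph_connected_fst_eq f Hgaps Hlarge C HC Hconn y1 x1 x2).
  - intros ->. exists (fun p => p = x). repeat split; auto using connected2_singleton.
    intros p ->. assumption.
Qed.

Theorem mainTheorem4 (gamma : R -> Prop) (A : R -> R) (n : nat) :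
  hamel_basis gamma -> gamma 1 ->
  Q_linear A -> A 1 = 1 -> (forall b, gamma b -> b <> 1 -> A b = 0) ->
  (1 <= n)%nat ->
  ~ continuity (fun x => A x ^ n) /\
  monomial_fun n (fun x => A x ^ n) /\
  totally_disconnected2 (graph (fun x => A x ^ n)).
Proof.
  (* Linear independence of [gamma] and [gamma 1] only make [A] well defined. *)
  intros [_ Hspan] _ HA HA1 Hothers Hn.
  assert (Hrat : forall x, is_rational (A x)).
  { apply (Q_linear_rational_valued A HA gamma Hspan). intros b Hb.
    destruct (Req_dec b 1) as [->|Hb1].
    - rewrite HA1. exact is_rational_1.
    - rewrite Hothers by assumption. exact is_rational_0. }
  split; [|split].
  - apply (not_continuity_of_dense_zeros _ 1); [rewrite HA1, pow1; lra|].
    exact (Q_linear_pow_dense_zeros A HA HA1 Hrat n Hn).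
  - exact (monomial_fun_additive_pow A n (proj1 HA)).
  - apply totally_disconnected2_graph.
    + exact (Q_linear_pow_range_gaps A Hrat n).
    + exact (Q_linear_pow_large_values A HA HA1 Hrat n Hn).
Qed.
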